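(* Let $G$ be a finite solvable group, $N$ a normal subgroup of $G$, $a\in G$, and $C=\mathbf{C}_G(a)$. Write $\bar G=G/N$ and $\bar g=gN$ for $g\in G$, and set $C_N=\{g\in G\mid [a,g]\in N\}$. Then $C_N$ is a subgroup of $G$ containing $CN$, $C_N/N=\mathbf{C}_{\bar G}(\bar a)$, and $$\eta\big(\bar a^{\bar G}(\bar a^{-1})^{\bar G}\big)+\eta\big((a^{C_N}(a^{-1})^{C_N})^G\big)-1\le \eta\big(a^G(a^{-1})^G\big).$$
   Context: $x^g=g^{-1}xg$ and $[x,g]=x^{-1}g^{-1}xg$. For a subgroup $K$ and element $x$, $x^K=\{x^k\mid k\in K\}$; products of sets are $XY=\{xy\mid x\in X,y\in Y\}$; for a subset $X\subseteq G$, $X^G=\bigcup_{g\in G}X^g$ is the smallest $G$-invariant set containing $X$. For a nonempty subset $X$ of a group $L$ that is $L$-invariant, $\eta(X)$ is the number of distinct conjugacy classes of $L$ whose union is $X$ (here $\eta$ of subsets of $G$ counts $G$-classes and $\eta$ of subsets of $\bar G$ counts $\bar G$-classes). *)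

From mathcomp Require Import all_boot all_fingroup all_solvable.
Set Implicit Arguments. Unset Strict Implicit. Unset Printing Implicit Defensive.
Local Open Scope group_scope.

(* eta L X : the number of conjugacy classes of L contained in X.
   For a nonempty L-invariant subset X of L this is exactly the number of
   L-classes whose union is X. *)
Definition eta (gT : finGroupType) (L X : {set gT}) : nat :=
  #|[set K in classes L | K \subset X]|.

Definition CN (gT : finGroupType) (G N : {set gT}) (a : gT) : {set gT} :=
  [set g in G | [~ a, g] \in N].

(* A class of G/N inside (a^G (a^-1)^G)/N is the image of a class of G inside
   a^G (a^-1)^G, and all the classes lying in N collapse onto the trivial class
   of G/N; this gives the quotient term plus one extra class. The set
   (a^C_N (a^-1)^C_N)^G lies in N, because a^c (a^-1)^d = a [a,c] [a,d]^-1 a^-1,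
   so its classes are among those collapsed ones. *)

From mathcomp Require Import all_boot all_fingroup all_solvable.

Set Implicit Arguments.
Unset Strict Implicit.
Unset Printing Implicit Defensive.

Local Open Scope group_scope.

Lemma etaS (gT : finGroupType) (L X Y : {set gT}) :
  X \subset Y -> eta L X <= eta L Y.
Proof.
move=> sXY; apply/subset_leq_card/subsetP=> K; rewrite !inE => /andP[-> sKX].
exact: subset_trans sKX sXY.
Qed.

Lemma class_support_sub_normal (gT : finGroupType) (A B : {set gT})
    (G : {group gT}) :
  A \subset B -> G \subset 'N(B) -> class_support A G \subset B.
Proof.
move=> sAB nBG; apply/subsetP=> _ /imset2P[x g xA gG ->].
by rewrite memJ_norm ?(subsetP nBG) ?(subsetP sAB).
Qed.

Section QuotientClasses.

Variables (gT : finGroupType) (G N : {group gT}) (Y : {set gT}).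
Hypotheses (nNG : G \subset 'N(N)) (sYG : Y \subset G) (nYG : G \subset 'N(Y)).

Let classesY := [set K in classes G | K \subset Y].

Lemma classes_quotient_image :
  [set L in classes (G / N) | L \subset Y / N] \subset
    (fun K => coset N @* K) @: classesY.
Proof.
apply/subsetP=> _ /setIdP[/imsetP[yb /morphimP[y nNy yG ->] ->] sLY].
case/morphimP: (subsetP sLY _ (class_refl _ _)) => z nNz zY yNz.
apply/imsetP; exists (z ^: G); last by rewrite morphim_class // yNz.
rewrite inE mem_classes ?(subsetP sYG) //=.
by apply/subsetP=> _ /imsetP[g gG ->]; rewrite memJ_norm ?(subsetP nYG).
Qed.

Lemma quotient_classes_subN :
  (fun K => coset N @* K) @: [set K in classesY | K \subset N]
    \subset [set 1 ^: (G / N)].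
Proof.
apply/subsetP=> _ /imsetP[_ /setIdP[/setIdP[/imsetP[x xG ->] _] sxN] ->].
have xN := subsetP sxN x (class_refl _ _).
by rewrite morphim_class ?(subsetP nNG) //= coset_id ?inE.
Qed.

Lemma eta_quotient_setIN_le :
  eta (G / N) (Y / N) + eta G (Y :&: N) <= eta G Y + 1.
Proof.
set F := fun K => coset N @* K; set S := [set K : {set gT} | K \subset N].
have eta_YN : eta G (Y :&: N) = #|classesY :&: S|.
  by apply: eq_card=> K; rewrite !inE subsetI andbA.
have image_bound : #|F @: classesY| <= 1 + #|classesY :\: S|.
  rewrite -{1}(setID classesY S) imsetU.
  apply: leq_trans (leq_card_setU _ _) (leq_add _ (leq_imset_card _ _)).
  rewrite -(cards1 (1 ^: (G / N))); apply: subset_leq_card.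
  apply: subset_trans quotient_classes_subN; apply: imsetS.
  by apply/subsetP=> K; rewrite !inE.
rewrite eta_YN /eta -/classesY -(cardsID S classesY) addnC -addnA leq_add2l addnC.
exact: leq_trans (subset_leq_card classes_quotient_image) image_bound.
Qed.

End QuotientClasses.

Section CentralizerModN.

Variables (gT : finGroupType) (G N : {group gT}) (a : gT).
Hypotheses (nsNG : N <| G) (aG : a \in G).

Let nNG : G \subset 'N(N) := normal_norm nsNG.
Let nNa : a \in 'N(N) := subsetP nNG a aG.

Lemma CN_preimage : CN G N a = G :&: coset N @*^-1 'C[coset N a].
Proof.
apply/setP=> g; rewrite inE in_setI; apply: andb_id2l => gG.
have nNg := subsetP nNG g gG; rewrite morphpreE in_setI nNg in_set.
apply/idP/cent1P => [aNg | cNag].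
- by apply/commute_sym/commgP; rewrite -morphR //; apply/eqP/coset_id.
- by apply: coset_idr; rewrite ?groupR // morphR //; apply/eqP/commgP/commute_sym.
Qed.

Lemma group_set_CN : group_set (CN G N a).
Proof. by rewrite CN_preimage group_setI. Qed.

Canonical CN_group := Group group_set_CN.

Lemma mulg_cent1_subCN : 'C_G[a] * N \subset CN G N a.
Proof.
rewrite -[CN G N a]/(gval CN_group); apply: mul_subG; apply/subsetP=> g.
- case/setIP=> gG /cent1P/commute_sym/commgP/eqP cag.
  by rewrite inE gG cag group1.
- move=> gN; rewrite inE (subsetP (normal_sub nsNG)) //=.
  by rewrite commgEr groupM ?groupV // memJ_norm ?groupV.
Qed.

Lemma quotient_CN : CN G N a / N = 'C_(G / N)[coset N a].
Proof. by rewrite CN_preimage /quotient morphim_setIpre. Qed.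

Lemma mulg_classes_CN_subN : (a ^: CN G N a) * (a^-1 ^: CN G N a) \subset N.
Proof.
apply/subsetP=> _ /mulsgP[_ _ /imsetP[c cCN ->] /imsetP[d dCN ->] ->].
move: cCN dCN; rewrite !inE => /andP[_ Nac] /andP[_ Nad].
rewrite conjVg !conjg_mulR invMg mulgA.
have -> : a * [~ a, c] * [~ a, d]^-1 * a^-1 = ([~ a, c] * [~ a, d]^-1) ^ a^-1.
  by rewrite conjgE invgK !mulgA.
by rewrite memJ_norm ?groupV // groupM ?groupV.
Qed.

Lemma quotient_mulg_classes :
  (coset N a ^: (G / N)) * ((coset N a)^-1 ^: (G / N))
    = ((a ^: G) * (a^-1 ^: G)) / N.
Proof.
have sGaN x : x \in G -> x ^: G \subset 'N(N).
  by move=> xG; apply: subset_trans nNG; rewrite class_subG.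
by rewrite /quotient morphimMl ?sGaN // !morphim_class ?groupV // morphV.
Qed.

End CentralizerModN.

Theorem lemma4p2 (gT : finGroupType) (G N : {group gT}) (a : gT) :
  solvable G -> N <| G -> a \in G ->
  [/\ group_set (CN G N a),
      'C_G[a] * N \subset CN G N a,
      CN G N a / N = 'C_(G / N)[coset N a]
    & (eta (G / N) ((coset N a ^: (G / N)) * ((coset N a)^-1 ^: (G / N)))%g
      + eta G (class_support ((a ^: CN G N a) * (a^-1 ^: CN G N a))%g G)
      <= eta G ((a ^: G) * (a^-1 ^: G))%g + 1)%N].
Proof.
move=> _ nsNG aG.
split; [exact: group_set_CN | exact: mulg_cent1_subCN | exact: quotient_CN |].
set Y := (a ^: G) * (a^-1 ^: G).
have sYG : Y \subset G by rewrite mul_subG ?class_subG ?groupV.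
have nYG : G \subset 'N(Y) by rewrite normsM ?class_norm.
have sCNG : CN G N a \subset G by apply/subsetP=> g /setIdP[].
have sZYN : class_support ((a ^: CN G N a) * (a^-1 ^: CN G N a)) G
              \subset Y :&: N.
  rewrite subsetI !class_support_sub_normal ?mulg_classes_CN_subN //.
    exact: normal_norm.
  exact: mulgSS (imsetS _ sCNG) (imsetS _ sCNG).
rewrite quotient_mulg_classes //.
apply: leq_trans _ (eta_quotient_setIN_le (normal_norm nsNG) sYG nYG).
by rewrite leq_add2l etaS.
Qed.
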